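(* Let $(N_r)_{r\in\mathbb{Z}}$ be the Narayana sequence, let $a,b,r$ be integers with $1\le b\le a$ and $m=ar+b>a$. Then for every integer $s\ge 0$ there exist integers $\alpha,\beta,\gamma$ such that $$N_{ar+b}=\alpha N_{a(s+2)+b}+\beta N_{a(s+1)+b}+\gamma N_{as+b};$$ in particular (taking $s=0$) $N_m$ is an integer linear combination of $N_{2a+b}$, $N_{a+b}$ and $N_b$.
   Context: The Narayana sequence $(N_r)_{r\in\mathbb{Z}}$ is defined by $N_0=0$, $N_1=N_2=1$ and $N_r=N_{r-1}+N_{r-3}$ for all integers $r$ (extended to negative indices via $N_{r-3}=N_r-N_{r-1}$). The numbers $N_b, N_{a+b}, N_{2a+b},\dots$ are the entries of the $b$-th column of the table whose rows are $(N_{ka+1},\dots,N_{ka+a})$, $k=0,1,2,\dots$; the claim says $N_{ar+b}$ is an integer combination of any three consecutive entries of this column. *)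

From Stdlib Require Import ZArith Lia.
Open Scope Z_scope.

Fixpoint nar_pos (n : nat) : Z :=
  match n with
  | O => 0
  | S O => 1
  | S (S O) => 1
  | S ((S (S k)) as n2) => nar_pos n2 + nar_pos k
  end.

(* M_k := N_{-k}, obtained from the backward recurrence N_{r-3} = N_r - N_{r-1}:
   M_0 = 0, M_1 = N_2 - N_1 = 0, M_2 = N_1 - N_0 = 1, M_{k+3} = M_k - M_{k+1}. *)
Fixpoint nar_neg (k : nat) : Z :=
  match k with
  | O => 0
  | S O => 0
  | S (S O) => 1
  | S (S (S j as k1) as k2) => nar_neg j - nar_neg k1
  end.

Definition narayana (r : Z) : Z :=
  if Z.leb 0 r then nar_pos (Z.to_nat r) else nar_neg (Z.to_nat (- r)).

Lemma narayana_0 : narayana 0 = 0. Proof. reflexivity. Qed.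
Lemma narayana_1 : narayana 1 = 1. Proof. reflexivity. Qed.
Lemma narayana_2 : narayana 2 = 1. Proof. reflexivity. Qed.
Example narayana_test :
  narayana 10 = narayana 9 + narayana 7 /\ narayana 1 = narayana 0 + narayana (-2)
  /\ narayana (-3) = narayana (-4) + narayana (-6)
  /\ narayana 2 = narayana 1 + narayana (-1).
Proof. repeat split; reflexivity. Qed.

From Stdlib Require Import ZArith Lia.
Open Scope Z_scope.

(* Shifting the index of a solution of N_{n+3} = N_{n+2} + N_n by a expresses
   (N_{n+a+2}, N_{n+a+1}, N_{n+a}) through (N_{n+2}, N_{n+1}, N_n) by a matrix A
   which, like the companion matrix of the recurrence, has determinant 1.  By
   Cayley-Hamilton the column u_k = N_{ak+b} then satisfies
   u_{k+3} = tr(A) u_{k+2} - c u_{k+1} + u_k with integer coefficients.  Since the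
   last coefficient is 1 this recurrence runs backwards over Z as well, so each u_r
   is an integer combination of any three consecutive terms u_{s+2}, u_{s+1}, u_s. *)

Lemma narayana_of_nat (k : nat) : narayana (Z.of_nat k) = nar_pos k.
Proof.
  unfold narayana. rewrite Nat2Z.id.
  destruct (Z.leb_spec 0 (Z.of_nat k)); [reflexivity | lia].
Qed.

Lemma narayana_opp_of_nat (k : nat) : narayana (- Z.of_nat k) = nar_neg k.
Proof.
  unfold narayana. destruct k as [|k]; [reflexivity |].
  destruct (Z.leb_spec 0 (- Z.of_nat (S k))); [lia |].
  rewrite Z.opp_involutive, Nat2Z.id. reflexivity.
Qed.

Lemma narayana_rec (n : Z) : narayana (n + 3) = narayana (n + 2) + narayana n.
Proof.
  destruct (Z.leb_spec 0 n) as [n_ge0 | n_lt0].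
  - destruct (Z_of_nat_complete n n_ge0) as [k ->].
    replace (Z.of_nat k + 3) with (Z.of_nat (S (S (S k)))) by lia.
    replace (Z.of_nat k + 2) with (Z.of_nat (S (S k))) by lia.
    rewrite !narayana_of_nat. reflexivity.
  - destruct (Z.leb_spec n (-3)) as [n_le | n_gt].
    + destruct (Z_of_nat_complete (- n - 3)) as [k k_def]; [lia |].
      replace n with (- Z.of_nat (S (S (S k)))) by lia.
      replace (- Z.of_nat (S (S (S k))) + 3) with (- Z.of_nat k) by lia.
      replace (- Z.of_nat (S (S (S k))) + 2) with (- Z.of_nat (S k)) by lia.
      rewrite !narayana_opp_of_nat. simpl. ring.
    + assert (n = -1 \/ n = -2) as [-> | ->] by lia; reflexivity.
Qed.

Definition int_comb3 (p q r w : Z) : Prop :=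
  exists alpha beta gamma : Z, w = alpha * p + beta * q + gamma * r.

Lemma int_comb3_lincomb (p q r w1 w2 w3 k1 k2 k3 : Z) :
  int_comb3 p q r w1 -> int_comb3 p q r w2 -> int_comb3 p q r w3 ->
  int_comb3 p q r (k1 * w1 + k2 * w2 + k3 * w3).
Proof.
  intros (a1 & b1 & g1 & ->) (a2 & b2 & g2 & ->) (a3 & b3 & g3 & ->).
  exists (k1 * a1 + k2 * a2 + k3 * a3), (k1 * b1 + k2 * b2 + k3 * b3),
    (k1 * g1 + k2 * g2 + k3 * g3).
  ring.
Qed.

Section UnimodularRecurrence.

Variables (u : Z -> Z) (c1 c2 s : Z).
Hypothesis u_rec : forall k, u (k + 3) = c1 * u (k + 2) + c2 * u (k + 1) + u k.

Let spanned (t : Z) : Prop := int_comb3 (u (s + 2)) (u (s + 1)) (u s) (u t).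
Let window (t : Z) : Prop := spanned t /\ spanned (t + 1) /\ spanned (t + 2).

Lemma window_succ (t : Z) : window t <-> window (t + 1).
Proof.
  unfold window.
  replace (t + 1 + 1) with (t + 2) by ring. replace (t + 1 + 2) with (t + 3) by ring.
  split.
  - intros (span0 & span1 & span2). repeat split; try assumption.
    unfold spanned. rewrite u_rec, <- (Z.mul_1_l (u t)).
    now apply int_comb3_lincomb.
  - intros (span1 & span2 & span3). repeat split; try assumption.
    unfold spanned.
    replace (u t) with (1 * u (t + 3) + (- c1) * u (t + 2) + (- c2) * u (t + 1))
      by (rewrite u_rec; ring).
    now apply int_comb3_lincomb.
Qed.

Lemma window_all (t : Z) : window t.
Proof.
  assert (base : window s).
  { repeat split; [exists 0, 0, 1 | exists 0, 1, 0 | exists 1, 0, 0]; ring. }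
  replace t with (s + (t - s)) by ring.
  generalize (t - s) as j. intro j.
  induction j as [| j IH | j IH] using Z.peano_ind.
  - now rewrite Z.add_0_r.
  - rewrite Z.add_succ_r. exact (proj1 (window_succ _) IH).
  - apply window_succ. rewrite <- Z.sub_1_r. now replace (s + (j - 1) + 1) with (s + j) by ring.
Qed.

Lemma rec3_int_comb3 (t : Z) : int_comb3 (u (s + 2)) (u (s + 1)) (u s) (u t).
Proof. apply window_all. Qed.

End UnimodularRecurrence.

Definition det3 (a11 a12 a13 a21 a22 a23 a31 a32 a33 : Z) : Z :=
  a11 * (a22 * a33 - a23 * a32) - a12 * (a21 * a33 - a23 * a31)
  + a13 * (a21 * a32 - a22 * a31).

Definition principal_minors3 (a11 a12 a13 a21 a22 a23 a31 a32 a33 : Z) : Z :=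
  (a11 * a22 - a12 * a21) + (a11 * a33 - a13 * a31) + (a22 * a33 - a23 * a32).

(* Invariants of the matrix in shift_by_rows below, whose rows give f (n+a+2), f (n+a+1), f (n+a). *)
Definition shift_det (x y z : Z) : Z := det3 (x + y + z) x (x + y) (x + y) z x x y z.

Definition shift_minors (x y z : Z) : Z :=
  principal_minors3 (x + y + z) x (x + y) (x + y) z x x y z.

Definition shift_trace (x y z : Z) : Z := (x + y + z) + z + z.

Section ShiftMatrix.

Variable f : Z -> Z.
Hypothesis f_rec : forall n, f (n + 3) = f (n + 2) + f n.

Definition shift_by (a x y z : Z) : Prop :=
  forall n, f (n + a) = x * f (n + 2) + y * f (n + 1) + z * f n.

Lemma shift_by_succ {a x y z : Z} : shift_by a x y z -> shift_by (a + 1) (x + y) z x.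
Proof.
  intros shift n.
  replace (n + (a + 1)) with (n + 1 + a) by ring. rewrite shift.
  replace (n + 1 + 2) with (n + 3) by ring. replace (n + 1 + 1) with (n + 2) by ring.
  rewrite f_rec. ring.
Qed.

Lemma shift_by_pred {a x y z : Z} : shift_by a x y z -> shift_by (a - 1) z (x - z) y.
Proof.
  intros shift n.
  replace (n + (a - 1)) with (n - 1 + a) by ring. rewrite shift.
  replace (n - 1 + 2) with (n + 1) by ring. replace (n - 1 + 1) with n by ring.
  assert (back := f_rec (n - 1)).
  replace (n - 1 + 3) with (n + 2) in back by ring.
  replace (n - 1 + 2) with (n + 1) in back by ring.
  replace (f (n - 1)) with (f (n + 2) - f (n + 1)) by lia. ring.
Qed.

Lemma shift_by_exists (a : Z) : exists x y z, shift_det x y z = 1 /\ shift_by a x y z.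
Proof.
  induction a as [| a IH | a IH] using Z.peano_ind.
  - exists 0, 0, 1. split; [reflexivity |]. intro n. rewrite Z.add_0_r. ring.
  - destruct IH as (x & y & z & det1 & shift).
    exists (x + y), z, x. split.
    + rewrite <- det1. unfold shift_det, det3. ring.
    + exact (shift_by_succ shift).
  - destruct IH as (x & y & z & det1 & shift).
    exists z, (x - z), y. split.
    + rewrite <- det1. unfold shift_det, det3. ring.
    + rewrite <- Z.sub_1_r. exact (shift_by_pred shift).
Qed.

Lemma shift_by_rows {a x y z : Z} : shift_by a x y z -> forall n,
  f (n + a + 2) = (x + y + z) * f (n + 2) + x * f (n + 1) + (x + y) * f n /\
  f (n + a + 1) = (x + y) * f (n + 2) + z * f (n + 1) + x * f n /\
  f (n + a) = x * f (n + 2) + y * f (n + 1) + z * f n.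
Proof.
  intros shift n.
  assert (shift1 := shift_by_succ shift).
  assert (shift2 := shift_by_succ shift1).
  split; [| split; [| apply shift]].
  - replace (n + a + 2) with (n + (a + 1 + 1)) by ring. rewrite shift2. ring.
  - rewrite <- Z.add_assoc. apply shift1.
Qed.

Lemma progression_rec (a : Z) : exists c1 c2 : Z, forall n,
  f (n + a + a + a) = c1 * f (n + a + a) + c2 * f (n + a) + f n.
Proof.
  destruct (shift_by_exists a) as (x & y & z & det1 & shift).
  exists (shift_trace x y z), (- shift_minors x y z). intro n.
  destruct (shift_by_rows shift (n + a + a)) as (_ & _ & row3).
  destruct (shift_by_rows shift (n + a)) as (row2_2 & row2_1 & row2_0).
  destruct (shift_by_rows shift n) as (row1_2 & row1_1 & row1_0).
  (* Cayley-Hamilton for the shift matrix *)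
  enough (char : f (n + a + a + a) = shift_trace x y z * f (n + a + a)
                 - shift_minors x y z * f (n + a) + shift_det x y z * f n)
    by (rewrite det1 in char; rewrite char; ring).
  rewrite row3, row2_2, row2_1, row2_0, row1_2, row1_1, row1_0.
  unfold shift_trace, shift_minors, shift_det, principal_minors3, det3. ring.
Qed.

End ShiftMatrix.

Theorem theorem5 (a b r : Z) (hb : 1 <= b <= a) (hm : a * r + b > a) :
  forall s : Z, 0 <= s ->
  exists alpha beta gamma : Z,
    narayana (a * r + b) =
      alpha * narayana (a * (s + 2) + b) + beta * narayana (a * (s + 1) + b)
      + gamma * narayana (a * s + b).
Proof.
  intros s _.
  destruct (progression_rec narayana narayana_rec a) as (c1 & c2 & prog_rec).
  set (u := fun k => narayana (a * k + b)).
  assert (u_rec : forall k, u (k + 3) = c1 * u (k + 2) + c2 * u (k + 1) + u k).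
  { intro k. unfold u.
    replace (a * (k + 3) + b) with (a * k + b + a + a + a) by ring.
    replace (a * (k + 2) + b) with (a * k + b + a + a) by ring.
    replace (a * (k + 1) + b) with (a * k + b + a) by ring.
    apply prog_rec. }
  exact (rec3_int_comb3 u c1 c2 s u_rec r).
Qed.
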